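(* Let $p$ be a prime, let $d,n$ be natural numbers, and let $A\subseteq\{0,1\}^n\subseteq\mathbb{F}_p^n$ satisfy $|A|>p\cdot|\mathcal{M}_{\lfloor d/p\rfloor}(p,n)|$. Then $\mathsf{int\text{-}deg}_p(p\cdot A)>d$.
   Context: For $A\subseteq\mathbb{F}_p^n$ and a positive integer $k$, $k\cdot A=\{a_1+\dots+a_k \mid a_i\in A\}$ is the $k$-fold sumset (addition in $\mathbb{F}_p^n$). A polynomial in $\mathbb{F}_p[x_1,\dots,x_n]$ is $p$-reduced if each variable appears with individual degree at most $p-1$; every function $\mathbb{F}_p^n\to\mathbb{F}_p$ is represented by a unique $p$-reduced polynomial. For $B\subseteq\mathbb{F}_p^n$, $\mathsf{int\text{-}deg}_p(B)$ is the minimum $d$ such that every function $f:B\to\mathbb{F}_p$ agrees on $B$ with some $p$-reduced polynomial of total degree at most $d$. $\mathcal{M}_k(p,n)$ denotes the set of monomials in $x_1,\dots,x_n$ in which each variable has degree at most $p-1$ and the total degree is at most $k$. *)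

From HB Require Import structures.
From mathcomp Require Import all_boot all_order all_algebra.
Set Implicit Arguments. Unset Strict Implicit. Unset Printing Implicit Defensive.
Import GRing.Theory.
Local Open Scope ring_scope.

(* Exponent vectors of p-reduced monomials: each exponent < p. *)
Definition expvec (p n : nat) := {ffun 'I_n -> 'I_p}.

Definition monos (p n k : nat) : {set expvec p n} :=
  [set m : expvec p n | (\sum_(i < n) (m i : nat) <= k)%N].

Definition mono_eval (p n : nat) (m : expvec p n) (x : 'rV['F_p]_n) : 'F_p :=
  \prod_(i < n) x ord0 i ^+ m i.

Definition poly_eval (p n d : nat) (c : {ffun expvec p n -> 'F_p})
  (x : 'rV['F_p]_n) : 'F_p :=
  \sum_(m in monos p n d) c m * mono_eval m x.

Definition interp_deg (p n : nat) (B : {set 'rV['F_p]_n}) (d : nat) : bool :=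
  [forall f : {ffun 'rV['F_p]_n -> 'F_p},
     [exists c : {ffun expvec p n -> 'F_p},
        [forall x in B, f x == poly_eval d c x]]].

(* int-deg_p(B): the least d with interp_deg. Such d always exists and is
   at most n*(p-1) (all p-reduced monomials have degree <= n*(p-1)), so
   searching d in [0, n*(p-1)] finds the minimum. *)
Definition int_deg (p n : nat) (B : {set 'rV['F_p]_n}) : nat :=
  find (interp_deg B) (iota 0 (n * (p - 1)).+1).

Definition sumset (p n k : nat) (A : {set 'rV['F_p]_n}) : {set 'rV['F_p]_n} :=
  [set x | [exists a : {ffun 'I_k -> 'rV['F_p]_n},
              [forall i, a i \in A] && (x == \sum_(i < k) a i)]].

Definition boolean_set (p n : nat) (A : {set 'rV['F_p]_n}) : Prop :=
  forall a, a \in A -> forall i, (a ord0 i == 0) || (a ord0 i == 1).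

(* Suppose a polynomial P of degree at most d agrees with the indicator of 0
   on p.A.  For Boolean a_1, ..., a_p, the sum a_1 + ... + a_p vanishes in
   F_p^n iff all a_j are equal, so T(a_1, ..., a_p) = P(a_1 + ... + a_p) is a
   diagonal tensor on A^p.  Expanding P(a_1 + ... + a_p) into monomials, each
   term has degree at most d/p in some a_j; hence T vanishes when paired with
   functions u_1, ..., u_p on A that are all orthogonal to M_(d/p), while the
   diagonal gives sum_(x in A) u_1(x) ... u_p(x).  These u_j form a subspace
   of codimension at most |M_(d/p)| < |A|/p, and a rank argument on the
   bilinear forms (g1, g2) |-> sum g1 g2 h^(p-2) produces u_1, u_2 and
   u_3 = ... = u_p = h with nonzero diagonal sum. *)

From mathcomp Require Import all_boot all_order all_algebra.
From mathcomp Require Import finfield zify.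
Set Implicit Arguments. Unset Strict Implicit. Unset Printing Implicit Defensive.
Import GRing.Theory.
Local Open Scope ring_scope.

Section SupportRank.
Variables (F : fieldType) (N : nat).

Definition supp (v : 'rV[F]_N) : {set 'I_N} := [set i | v 0 i != 0].

Definition sel_mx (S : {set 'I_N}) : 'M[F]_(#|S|, N) :=
  \matrix_(k, j) (j == enum_val k)%:R.

Lemma mul_sel_mx_trE m (M : 'M[F]_(m, N)) S a k :
  (M *m (sel_mx S)^T) a k = M a (enum_val k).
Proof.
rewrite !mxE (bigD1 (enum_val k)) //= !mxE eqxx mulr1 big1 ?addr0 //.
by move=> j /negbTE nkj; rewrite !mxE nkj mulr0.
Qed.

Lemma mul_sel_mx_tr_eq0 m (M : 'M[F]_(m, N)) S :
  (M *m (sel_mx S)^T == 0) = [forall a, forall i in S, M a i == 0].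
Proof.
apply/eqP/forallP => [M0 a|M0]; last first.
  apply/matrixP => a k; rewrite mul_sel_mx_trE mxE.
  by apply/eqP; have /forall_inP := M0 a; apply; apply: enum_valP.
apply/forall_inP => i Si.
have := congr1 (fun M : 'M[F]_(m, #|S|) => M a (enum_rank_in Si i)) M0.
by rewrite mul_sel_mx_trE enum_rankK_in // mxE => ->.
Qed.

Lemma rank_sel_mx S : \rank (sel_mx S) = #|S|.
Proof.
apply/eqP; rewrite eqn_leq rank_leq_row /=.
have selK : sel_mx S *m (sel_mx S)^T = 1%:M.
  apply/matrixP => a k; rewrite mul_sel_mx_trE !mxE.
  by rewrite (inj_eq enum_val_inj) eq_sym.
by rewrite -{1}(mxrank1 F #|S|) -selK mxrankM_maxl.
Qed.

Lemma rank_vanishing_on S : \rank (kermx (sel_mx S)^T) = (N - #|S|)%N.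
Proof. by rewrite mxrank_ker mxrank_tr rank_sel_mx. Qed.

(* Pick [rank K] linearly independent columns of [K]; some combination of the
   rows of [K] equals 1 on all of them. *)
Lemma exists_supp_ge_rank m (K : 'M[F]_(m, N)) :
  exists2 h : 'rV_N, (h <= K)%MS & (\rank K <= #|supp h|)%N.
Proof.
set f := maxrankfun K^T.
have full : row_full (colsub f K).
  by rewrite /row_full -mxrank_tr trmx_mxsub; exact: maxrowsub_free.
have [u uK] := submxP (submx_full (const_mx 1 : 'rV_(\rank K^T)) full).
exists (u *m K); first exact: submxMl.
have h1 t : (u *m K) 0 (f t) = 1.
  by have := congr1 (fun M : 'rV_(_) => M 0 t) uK; rewrite mulmx_colsub !mxE.
rewrite -mxrank_tr -(card_ord (\rank K^T)) -(card_imset _ (@maxrankfun_inj _ _ _ K^T)).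
by apply: subset_leq_card; apply/subsetP => _ /imsetP [t _ ->]; rewrite inE h1 oner_eq0.
Qed.

Lemma isotropic_rank_bound m (K : 'M[F]_(m, N)) (w : 'rV[F]_N) :
  K *m diag_mx w *m K^T = 0 -> (#|supp w| + 2 * \rank K <= 2 * N)%N.
Proof.
move=> KwK0.
have rank_Kw : (\rank (K *m diag_mx w) <= N - \rank K)%N.
  have : (K *m diag_mx w <= kermx K^T)%MS by rewrite sub_kermx KwK0.
  by move/mxrankS; rewrite mxrank_ker mxrank_tr.
have rank_ker_w : (\rank (K :&: kermx (diag_mx w))%MS <= N - #|supp w|)%N.
  rewrite -(rank_vanishing_on (supp w)); apply/mxrankS/(submx_trans (capmxSr _ _)).
  rewrite sub_kermx mul_sel_mx_tr_eq0; apply/forallP => a; apply/forall_inP => i.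
  rewrite inE => wi.
  have := congr1 (fun M : 'M[F]_(N, N) => M a i) (mulmx_ker (diag_mx w)).
  by rewrite mul_mx_diag !mxE => /eqP; rewrite mulf_eq0 (negbTE wi) orbF.
have := mxrank_mul_ker K (diag_mx w).
have := rank_leq_col K.
have := max_card (supp w); rewrite card_ord.
lia.
Qed.

Lemma exists_ker_prod_neq0 c (Phi : 'M[F]_(N, c)) k : (k.+2 * c < N)%N ->
  exists g1 g2 h : 'rV[F]_N,
    [/\ g1 *m Phi = 0, g2 *m Phi = 0, h *m Phi = 0 &
       \sum_i g1 0 i * g2 0 i * h 0 i ^+ k != 0].
Proof.
move=> cN; set K := kermx Phi.
have rankK : (N - c <= \rank K)%N by rewrite mxrank_ker leq_sub2l ?rank_leq_col.
have kerK g : (g <= K)%MS -> g *m Phi = 0 by rewrite sub_kermx => /eqP.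
have [h hK supp_h] := exists_supp_ge_rank K.
set w := \row_i h 0 i ^+ k.
have large_w : ~~ (#|supp w| + 2 * \rank K <= 2 * N)%N.
  have [k0|k_gt0] := posnP k.
    have -> : supp w = setT by apply/setP => i; rewrite !inE mxE k0 expr0 oner_eq0.
    by rewrite cardsT card_ord; move: cN; rewrite k0; lia.
  have -> : supp w = supp h.
    by apply/setP => i; rewrite !inE mxE expf_eq0 k_gt0.
  have := leq_mul (k_gt0 : 3 <= k.+2)%N (leqnn c); lia.
have /matrix0Pn [a [b Kab]] : K *m diag_mx w *m K^T != 0.
  by apply: contra large_w => /eqP; apply: isotropic_rank_bound.
exists (row a K), (row b K), h; split; rewrite ?kerK ?row_sub //.
rewrite (_ : \sum_i _ = (K *m diag_mx w *m K^T) a b) //.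
by rewrite !mxE; apply: eq_bigr => i _; rewrite mul_mx_diag !mxE mulrAC.
Qed.

End SupportRank.

Lemma dvdn_sum_bits_const p (b : 'I_p -> bool) :
  (p %| \sum_j b j)%N -> forall j j', b j = b j'.
Proof.
move=> p_dvd.
have split_p : (\sum_j ~~ b j + \sum_j b j = p)%N.
  rewrite -big_split /= -[RHS]card_ord -sum1_card.
  by apply: eq_bigr => j _; rewrite addn_negb.
have [S0|S_gt0] := posnP (\sum_j b j).
  move/eqP: S0; rewrite sum_nat_eq0 => /forall_inP b0 j j'.
  by move: (b0 j isT) (b0 j' isT); case: (b j); case: (b j').
have : (\sum_j ~~ b j == 0)%N by have := dvdn_leq S_gt0 p_dvd; lia.
rewrite sum_nat_eq0 => /forall_inP b1 j j'.
by move: (b1 j isT) (b1 j' isT); case: (b j); case: (b j').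
Qed.

Lemma boolean_sum_eq0 p n (a : 'I_p -> 'rV['F_p]_n) (j0 : 'I_p) : prime p ->
  (forall j i, (a j 0 i == 0) || (a j 0 i == 1)) ->
  (\sum_j a j == 0) = [forall j, a j == a j0].
Proof.
move=> p_pr a01; apply/eqP/forallP => [sum0 j|const]; last first.
  rewrite (eq_bigr (fun=> a j0)) => [|j _]; last exact/eqP.
  by rewrite sumr_const card_ord -scaler_nat (pchar_Fp_0 p_pr) scale0r.
apply/eqP/rowP => i.
have aE l : a l 0 i = (a l 0 i == 1)%:R.
  by case/orP: (a01 l i) => /eqP ->; rewrite ?eqxx // eq_sym oner_eq0.
have : (p %| \sum_l (a l 0%R i == 1%R))%N.
  rewrite (dvdn_pcharf (pchar_Fp p_pr)) natr_sum -(eq_bigr _ (fun l _ => aE l)).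
  by rewrite -summxE sum0 mxE.
by move/dvdn_sum_bits_const => /(_ j j0) same_bit; rewrite aE (aE j0) same_bit.
Qed.

Lemma sum_ffun_diag (R : comNzRingType) (I T : finType) (i0 : I) (F : I -> T -> R) :
  \sum_(a : {ffun I -> T}) [forall j, a j == a i0]%:R * \prod_j F j (a j) =
  \sum_x \prod_j F j x.
Proof.
have constE (a : {ffun I -> T}) :
    [forall j, a j == a i0]%:R = \sum_x \prod_j ((a j == x)%:R : R).
  rewrite (bigD1 (a i0)) //= [X in _ + X]big1 ?addr0 => [|x ne_x]; last first.
    by rewrite (bigD1 i0) //= eq_sym (negbTE ne_x) mul0r.
  have [const|/forallPn [j ne_j]] := boolP [forall j, a j == a i0].
    by rewrite big1 // => j _; rewrite (eqP (forallP const j)) eqxx.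
  by rewrite (bigD1 j) //= (negbTE ne_j) mul0r.
under eq_bigr do rewrite constE mulr_suml.
rewrite exchange_big /=; apply: eq_bigr => x _.
under eq_bigr do rewrite -big_split /=.
rewrite -(bigA_distr_bigA (fun j y => (y == x)%:R * F j y)) /=.
apply: eq_bigr => j _; rewrite (bigD1 x) //= eqxx mul1r big1 ?addr0 // => y ne_y.
by rewrite (negbTE ne_y) mul0r.
Qed.

Lemma exists_small_summand p (x : 'I_p -> nat) D : (0 < p)%N ->
  (\sum_j x j <= D)%N -> exists j, (x j <= D %/ p)%N.
Proof.
move=> p_gt0 sumD; apply/existsP/contraT => /existsPn large.
have : (\sum_(j < p) (D %/ p).+1 <= \sum_j x j)%N.
  by apply: leq_sum => j _; rewrite ltnNge large.
rewrite sum_nat_const card_ord mulnC; have := ltn_ceil D p_gt0; lia.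
Qed.

Section MonomialsOfSums.
Variables (p n : nat).
Local Notation vec := 'rV['F_p]_n.

Definition mono_deg (m : expvec p n) : nat := \sum_i (m i : nat).

Definition orth_monos (k : nat) (f : vec -> 'F_p) : Prop :=
  forall mu, mu \in monos p n k -> \sum_x f x * mono_eval mu x = 0.

Lemma monosS k k' : (k <= k')%N -> monos p n k \subset monos p n k'.
Proof. by move=> le_k; apply/subsetP => m; rewrite !inE => /leq_trans; apply. Qed.

(* x^m is the product of the linear factors x_(tag q), q : factor m. *)
Definition factor (m : expvec p n) := {i : 'I_n & 'I_(m i)}.

Lemma prod_factorE (m : expvec p n) (P : pred (factor m)) (y : vec) :
  \prod_(q | P q) y 0 (tag q) =
  \prod_i y 0 i ^+ #|[set l : 'I_(m i) | P (Tagged _ l)]|.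
Proof.
pose Q i (l : 'I_(m i)) := P (Tagged (fun i => 'I_(m i)) l).
rewrite (eq_bigl (fun q : factor m => true && Q _ (tagged q))); last by case.
rewrite -(sig_big_dep xpredT Q (fun i _ => y 0 i)).
by apply: eq_bigr => i _; rewrite -prodr_const; apply: eq_bigl => l; rewrite inE.
Qed.

Lemma mono_eval_factor (m : expvec p n) (y : vec) :
  mono_eval m y = \prod_(q : factor m) y 0 (tag q).
Proof.
rewrite prod_factorE; apply: eq_bigr => i _.
by rewrite (eq_card (B := 'I_(m i))) ?card_ord // => l; rewrite inE.
Qed.

Lemma card_factor_lt (m : expvec p n) (P : pred (factor m)) i :
  (#|[set l : 'I_(m i) | P (Tagged _ l)]| < p)%N.
Proof.
by apply: leq_ltn_trans (ltn_ord (m i)); rewrite -[X in (_ <= X)%N]card_ord max_card.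
Qed.

Definition sub_expvec (m : expvec p n) (P : pred (factor m)) : expvec p n :=
  [ffun i => Ordinal (card_factor_lt P i)].

Lemma mono_eval_sub (m : expvec p n) (P : pred (factor m)) (y : vec) :
  mono_eval (sub_expvec P) y = \prod_(q | P q) y 0 (tag q).
Proof. by rewrite prod_factorE; apply: eq_bigr => i _; rewrite ffunE. Qed.

Lemma mono_deg_partition (m : expvec p n) (s : factor m -> 'I_p) :
  (\sum_j mono_deg (sub_expvec (fun q => s q == j)) = mono_deg m)%N.
Proof.
rewrite exchange_big; apply: eq_bigr => i _.
under eq_bigr do rewrite ffunE /= -sum1dep_card.
by rewrite -[RHS]card_ord -sum1_card (partition_big (fun l => s (Tagged _ l)) xpredT).
Qed.

Lemma sum_prod_mono_sum (D : nat) (h : 'I_p -> vec -> 'F_p) (m : expvec p n) :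
  (0 < p)%N -> (mono_deg m <= D)%N -> (forall j, orth_monos (D %/ p) (h j)) ->
  \sum_(a : {ffun 'I_p -> vec}) (\prod_j h j (a j)) * mono_eval m (\sum_j a j) = 0.
Proof.
move=> p_gt0 deg_m orth_h.
have expand a : mono_eval m (\sum_j a j) =
    \sum_(s : {ffun factor m -> 'I_p}) \prod_q a (s q) 0 (tag q).
  by rewrite mono_eval_factor; under eq_bigr do rewrite summxE; rewrite bigA_distr_bigA.
under eq_bigr do rewrite expand mulr_sumr.
rewrite exchange_big /=; apply: big1 => s _.
have regroup a : (\prod_j h j (a j)) * \prod_q a (s q) 0 (tag q) =
    \prod_j (h j (a j) * mono_eval (sub_expvec (fun q => s q == j)) (a j)).
  rewrite big_split /= (partition_big s xpredT) //=; congr (_ * _).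
  by apply: eq_bigr => j _; rewrite mono_eval_sub; apply: eq_bigr => q /eqP ->.
under eq_bigr do rewrite regroup.
rewrite -(bigA_distr_bigA (fun j x => h j x * mono_eval _ x)) /=.
have deg_s : (\sum_j mono_deg (sub_expvec (fun q => s q == j)) <= D)%N.
  by rewrite mono_deg_partition.
have [j small_j] := exists_small_summand p_gt0 deg_s.
by rewrite (bigD1 j) //= orth_h ?mul0r // inE.
Qed.

Lemma sum_prod_poly_sum (D : nat) (c : {ffun expvec p n -> 'F_p})
    (h : 'I_p -> vec -> 'F_p) :
  (0 < p)%N -> (forall j, orth_monos (D %/ p) (h j)) ->
  \sum_(a : {ffun 'I_p -> vec}) (\prod_j h j (a j)) * poly_eval D c (\sum_j a j) = 0.
Proof.
move=> p_gt0 orth_h; rewrite /poly_eval.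
under eq_bigr do rewrite mulr_sumr.
rewrite exchange_big /=; apply: big1 => m; rewrite inE => deg_m.
under eq_bigr do rewrite mulrCA.
by rewrite -mulr_sumr (sum_prod_mono_sum p_gt0 deg_m orth_h) mulr0.
Qed.

End MonomialsOfSums.

Section DiagonalSum.
Variables (p n : nat) (A : {set 'rV['F_p]_n}).
Local Notation vec := 'rV['F_p]_n.

Lemma sum_prod_delta0_diag (P : vec -> 'F_p) (u : 'I_p -> vec -> 'F_p) (j0 : 'I_p) :
  prime p -> boolean_set A ->
  (forall x, x \in sumset p A -> P x = (x == 0)%:R) ->
  (forall j x, x \notin A -> u j x = 0) ->
  \sum_(a : {ffun 'I_p -> vec}) (\prod_j u j (a j)) * P (\sum_j a j) =
  \sum_x \prod_j u j x.
Proof.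
move=> p_pr A01 P_delta0 u_out; rewrite -(sum_ffun_diag j0); apply: eq_bigr => a _.
have [inA | /forallPn [j out_j]] := boolP [forall j, a j \in A].
  have sum_in : \sum_j a j \in sumset p A.
    by rewrite inE; apply/existsP; exists a; rewrite inA eqxx.
  rewrite (P_delta0 _ sum_in) (boolean_sum_eq0 j0 p_pr) 1?mulrC //.
  by move=> j i; apply: A01 (forallP inA j) i.
by rewrite (bigD1 j) //= u_out // !mul0r mulr0.
Qed.

Definition extend_on (v : 'rV['F_p]_#|A|) (x : vec) : 'F_p :=
  \sum_i (enum_val i == x)%:R * v 0 i.

Lemma extend_on_enum_val v i : extend_on v (enum_val i) = v 0 i.
Proof.
rewrite /extend_on (bigD1 i) //= eqxx mul1r big1 ?addr0 // => j ne_j.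
by rewrite (inj_eq enum_val_inj) (negbTE ne_j) mul0r.
Qed.

Lemma extend_on_out v x : x \notin A -> extend_on v x = 0.
Proof.
move=> xA; apply: big1 => i _; case: eqP => [def_x|_]; last by rewrite mul0r.
by move: xA; rewrite -def_x enum_valP.
Qed.

Lemma sum_extend_on v (f : vec -> 'F_p) :
  \sum_x extend_on v x * f x = \sum_i v 0 i * f (enum_val i).
Proof.
under eq_bigr do rewrite mulr_suml.
rewrite exchange_big /=; apply: eq_bigr => i _.
rewrite (bigD1 (enum_val i)) //= eqxx mul1r big1 ?addr0 // => x ne_x.
by rewrite eq_sym (negbTE ne_x) !mul0r.
Qed.

End DiagonalSum.

Lemma card_le_of_delta0_interp p n (A : {set 'rV['F_p]_n}) D
    (c : {ffun expvec p n -> 'F_p}) :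
  prime p -> boolean_set A ->
  (forall x, x \in sumset p A -> poly_eval D c x = (x == 0)%:R) ->
  (#|A| <= p * #|monos p n (D %/ p)|)%N.
Proof.
case: p A c => [|[|k]] A c p_pr; [by [] | by [] | ].
move=> A01 c_delta0; rewrite leqNgt; apply/negP => large_A.
set M := monos k.+2 n (D %/ k.+2).
pose Phi : 'M_(#|A|, #|M|) := \matrix_(i, r) mono_eval (enum_val r) (enum_val i).
have [g1 [g2 [h [g1K g2K hK prod_neq0]]]] := exists_ker_prod_neq0 Phi large_A.
pose v (j : 'I_k.+2) := match val j with 0 => g1 | 1 => g2 | _ => h end.
have vK j : v j *m Phi = 0 by rewrite /v; case: (val j) => [|[|]].
have orth_v j : orth_monos (D %/ k.+2) (extend_on (v j)).
  move=> mu mu_M; rewrite sum_extend_on.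
  have := congr1 (fun w : 'rV_#|M| => w 0 (enum_rank_in mu_M mu)) (vK j).
  rewrite !mxE => vK_mu; rewrite -[RHS]vK_mu; apply: eq_bigr => i _.
  by rewrite mxE enum_rankK_in.
have := sum_prod_poly_sum c (ltn0Sn _) orth_v.
rewrite (sum_prod_delta0_diag (u := fun j => extend_on (v j)) ord0 p_pr A01 c_delta0);
  last by move=> j x; apply: extend_on_out.
pose prod_v x := extend_on g1 x * (extend_on g2 x * extend_on h x ^+ k).
rewrite (eq_bigr prod_v) => [|x _]; last first.
  by rewrite !big_ord_recl (eq_bigr (fun=> extend_on h x)) ?prodr_const ?card_ord.
rewrite sum_extend_on => sum0; move/eqP: prod_neq0; apply; rewrite -[RHS]sum0.
by apply: eq_bigr => i _; rewrite !extend_on_enum_val mulrA.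
Qed.

Lemma expr_Fp_pred p (y : 'F_p) : prime p -> y != 0 -> y ^+ p.-1 = 1.
Proof.
move=> p_pr y_neq0; apply: (mulfI y_neq0).
rewrite mulr1 -exprS prednK ?prime_gt0 //.
by have := expf_card y; rewrite card_Fp.
Qed.

(* The indicator of 0 is prod_i (1 - x_i^(p-1)); its coefficient on x^m is
   prod_i coef (m i), with coef e = [e = 0] - [e = p-1]. *)
Lemma exists_poly_delta0 p n : prime p ->
  exists c : {ffun expvec p n -> 'F_p},
    forall x, poly_eval (n * (p - 1)) c x = (x == 0)%:R.
Proof.
case: p => [|[|k]] p_pr; [by [] | by [] | ].
pose coef (e : 'I_k.+2) : 'F_k.+2 := (e == ord0)%:R - (e == ord_max)%:R.
exists [ffun m : expvec k.+2 n => \prod_i coef (m i)] => x.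
have all_monos m : m \in monos k.+2 n (n * (k.+2 - 1)).
  rewrite inE subSS subn0.
  apply: (@leq_trans (\sum_(i < n) k.+1)); last by rewrite sum_nat_const card_ord.
  by apply: leq_sum => i _; rewrite -ltnS.
rewrite /poly_eval (eq_bigl xpredT) => [|m]; last by rewrite all_monos.
under eq_bigr do rewrite ffunE -big_split /=.
rewrite -(bigA_distr_bigA (fun i e => coef e * x 0 i ^+ e)) /=.
have delta (a : 'I_k.+2) (F : 'I_k.+2 -> 'F_k.+2) : \sum_e (e == a)%:R * F e = F a.
  rewrite (bigD1 a) //= eqxx mul1r big1 ?addr0 // => e ne_e.
  by rewrite (negbTE ne_e) mul0r.
have coord y : \sum_(e : 'I_k.+2) coef e * y ^+ e = (y == 0)%:R.
  rewrite /coef; under eq_bigr do rewrite mulrBl.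
  rewrite sumrB !delta expr0.
  have [->|y_neq0] := eqVneq y 0; first by rewrite expr0n subr0.
  by rewrite (expr_Fp_pred p_pr y_neq0) subrr.
under eq_bigr do rewrite coord.
have [->|x_neq0] := eqVneq x 0.
  by rewrite big1 // => i _; rewrite mxE eqxx.
have /rV0Pn [i x_i] := x_neq0.
by rewrite (bigD1 i) //= (negbTE x_i) mul0r.
Qed.

Lemma exists_delta0_interp_le_int_deg p n (B : {set 'rV['F_p]_n}) : prime p ->
  exists2 D, (D <= int_deg B)%N &
    exists c, forall x, x \in B -> poly_eval D c x = (x == 0)%:R.
Proof.
move=> p_pr; have [has_B|no_B] := boolP (has (interp_deg B) (iota 0 (n * (p - 1)).+1)).
  exists (int_deg B) => //.
  have := nth_find 0 has_B.
  rewrite nth_iota ?add0n; last by move: has_B; rewrite has_find size_iota.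
  move=> /forallP /(_ [ffun x => (x == 0)%:R]) /existsP [c /forall_inP c_B].
  by exists c => x /c_B /eqP <-; rewrite ffunE.
exists (n * (p - 1))%N; first by rewrite /int_deg (hasNfind no_B) size_iota.
by have [c c_delta0] := exists_poly_delta0 n p_pr; exists c => x _.
Qed.

Unset Implicit Arguments.

Theorem theorem3p1 (p d n : nat) (A : {set 'rV['F_p]_n}) :
  prime p ->
  boolean_set A ->
  (#|A| > p * #|monos p n (d %/ p)|)%N ->
  (int_deg (sumset p A) > d)%N.
Proof.
move=> p_pr A01 large_A; rewrite ltnNge; apply/negP => int_deg_le.
have [D le_D [c c_delta0]] := exists_delta0_interp_le_int_deg (sumset p A) p_pr.
have := card_le_of_delta0_interp p_pr A01 c_delta0.
apply/negP; rewrite -ltnNge; apply: leq_ltn_trans large_A.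
by rewrite leq_mul2l subset_leq_card ?orbT // monosS // leq_div2r // (leq_trans le_D).
Qed.
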